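(* Let $G$ and $H$ be abelian groups, let $T \subset G$ be a tile, and let $\rho : G \to H$ be a surjective homomorphism that is injective on $T$. Let $k,\ell \ge 0$ be integers. If $G^k\times H^\ell$ is $(T^{\times k}, \rho(T)^{\times \ell})$-tilable, then $G^{k+\ell}$ is $T$-tilable.
   Context: A tile in an abelian group is a non-empty subset. Given abelian groups $K_1,\dots,K_r$ and tiles $V_j\subset K_j$, let $\mathsf{V}_j \subset K_1\times\dots\times K_r$ be the set of points whose $j$-th coordinate lies in $V_j$ and whose other coordinates are $0$. A copy of $V_j$ is a translate $\mathsf{V}_j + x$ with $x \in K_1\times\dots\times K_r$. A subset of $K_1\times\dots\times K_r$ is $(V_1,\dots,V_r)$-tilable if it is a disjoint union of copies of $V_1,\dots,V_r$. The notation $V^{\times e}$ stands for $e$ consecutive entries $V,\dots,V$, and ''$T$-tilable'' for a subset of $G^{e}$ means $(T^{\times e})$-tilable. *)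

(* abelian groups are zmodType's. *)
From HB Require Import structures.
From mathcomp Require Import all_boot all_order all_algebra.
Set Implicit Arguments. Unset Strict Implicit. Unset Printing Implicit Defensive.
Import GRing.Theory.
Local Open Scope ring_scope.

Definition point (I : Type) (K : I -> zmodType) := forall i : I, K i.

Definition copy (I : Type) (K : I -> zmodType) (V : forall j : I, K j -> Prop)
  (j : I) (x : point K) : point K -> Prop :=
  fun p => V j (p j - x j) /\ (forall i : I, i <> j -> p i = x i).

Definition is_tiling (I : Type) (K : I -> zmodType) (V : forall j : I, K j -> Prop)
  (S : point K -> Prop) (C : (point K -> Prop) -> Prop) : Prop :=
  (forall c, C c -> exists (j : I) (x : point K), forall p, c p <-> copy V j x p) /\
  (forall c1 c2, C c1 -> C c2 -> c1 <> c2 -> forall p, ~ (c1 p /\ c2 p)) /\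
  (forall p, S p <-> exists c, C c /\ c p).

Definition tilable (I : Type) (K : I -> zmodType) (V : forall j : I, K j -> Prop)
  (S : point K -> Prop) : Prop :=
  exists C, is_tiling V S C.

Definition GH_factors (G H : zmodType) (k l : nat) : 'I_k + 'I_l -> zmodType :=
  fun i => match i with inl _ => G | inr _ => H end.

Definition GH_tiles (G H : zmodType) (k l : nat) (T : G -> Prop) (U : H -> Prop) :
  forall i : 'I_k + 'I_l, @GH_factors G H k l i -> Prop :=
  fun i => match i as i0 return @GH_factors G H k l i0 -> Prop with
           | inl _ => T | inr _ => U end.

Definition image_set (G H : Type) (f : G -> H) (T : G -> Prop) : H -> Prop :=
  fun h => exists t, T t /\ f t = h.
Arguments GH_tiles {G H} k l T U.

(* Let pull : G^{k+l} -> G^k x H^l apply rho to the last l coordinates.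
   Each point p of G^{k+l} lies over a unique tile y + V_j of the given
   tiling. For one of the first k directions the tile lifts through p to a
   copy of T; for one of the last l directions rho(p_j) - y_j = rho(t) for a
   unique t in T, and the tile lifts to the copy of T in direction j anchored
   at p_j - t. Injectivity of rho on T makes this anchor the same for every
   point of the lifted copy, so the lifted copies partition G^{k+l}. *)
From HB Require Import structures.
From mathcomp Require Import all_boot all_order all_algebra.
From Stdlib Require Import Classical ClassicalEpsilon FunctionalExtensionality PropExtensionality.
Set Implicit Arguments. Unset Strict Implicit. Unset Printing Implicit Defensive.
Import GRing.Theory.
Local Open Scope ring_scope.

Section Blocks.
Variables (I : Type) (K : I -> zmodType) (V : forall j : I, K j -> Prop).

Lemma tilable_of_blocks (B : point K -> point K -> Prop) :
  (forall p, B p p) ->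
  (forall p q, B p q -> forall r, B q r <-> B p r) ->
  (forall p, exists (j : I) (x : point K), forall r, B p r <-> copy V j x r) ->
  tilable V (fun _ => True).
Proof.
move=> B_refl B_trans B_copy.
have B_eq p q : B p q -> B q = B p.
  move=> Bpq; apply: functional_extensionality => r.
  exact: propositional_extensionality (B_trans _ _ Bpq r).
exists (fun c => exists p, c = B p); split; [|split].
- by move=> c [p ->].
- move=> _ _ [p1 ->] [p2 ->] ne r [B1r B2r]; apply: ne.
  by rewrite -(B_eq _ _ B1r) (B_eq _ _ B2r).
- by move=> p; split=> // _; exists (B p); split; [exists p|].
Qed.

Lemma tiling_shape (C : (point K -> Prop) -> Prop) :
  is_tiling V (fun _ => True) C ->
  exists (d : point K -> I) (b : point K -> point K),
    (forall u, copy V (d u) (b u) u) /\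
    (forall u v, copy V (d u) (b u) v -> d v = d u /\ b v = b u).
Proof.
move=> [C_copy [C_disj C_cover]].
have tile_ex u : exists c, C c /\ c u by exact: (proj1 (C_cover u)).
have inh : inhabited (I * point K).
  have [c [/C_copy [j [x _]] _]] := tile_ex (fun _ => 0).
  exact: inhabits (j, x).
pose tile u := epsilon (inhabits (fun _ => False)) (fun c => C c /\ c u).
pose shape c := epsilon inh (fun jx => forall r, c r <-> copy V jx.1 jx.2 r).
have tileP u : C (tile u) /\ tile u u.
  exact: (epsilon_spec _ (fun c => C c /\ c u) (tile_ex u)).
have shapeP u r : tile u r <-> copy V (shape (tile u)).1 (shape (tile u)).2 r.
  move: r; apply: (epsilon_spec inh (fun jx => forall r, _ <-> copy V jx.1 jx.2 r)).
  have [j [x hx]] := C_copy _ (tileP u).1; by exists (j, x).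
exists (fun u => (shape (tile u)).1), (fun u => (shape (tile u)).2).
split=> [u|u v /shapeP vu]; first exact/shapeP/(tileP u).2.
suff -> : tile v = tile u by [].
apply: NNPP => ne.
exact: C_disj _ _ (tileP v).1 (tileP u).1 ne v (conj (tileP v).2 vu).
Qed.

End Blocks.

Section Pullback.
Variables (I : eqType) (J : Type) (G : zmodType) (L : J -> zmodType).
Variables (V : I -> G -> Prop) (W : forall j : J, L j -> Prop).
Arguments W : clear implicits.
Variables (e : J -> I) (phi : forall j : J, {additive G -> L j}).
Hypothesis e_inj : injective e.
Hypothesis W_image : forall j w, W j w <-> exists2 t, V (e j) t & phi j t = w.
Hypothesis phi_inj :
  forall j a b, V (e j) a -> V (e j) b -> phi j a = phi j b -> a = b.
Variables (d : point L -> J) (b : point L -> point L).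
Hypothesis shape_mem : forall u, copy W (d u) (b u) u.
Hypothesis shape_const :
  forall u v, copy W (d u) (b u) v -> d v = d u /\ b v = b u.

Definition pull (p : point (fun _ : I => G)) : point L := fun j => phi j (p (e j)).

(* [a] is the [e j]-th coordinate of the base point of the lift through [p]
   of the tile containing [pull p]. *)
Definition pull_anchor (p : point (fun _ : I => G)) (a : G) : Prop :=
  let j := d (pull p) in phi j a = b (pull p) j /\ V (e j) (p (e j) - a).

Definition pull_block (p q : point (fun _ : I => G)) : Prop :=
  let j := d (pull p) in
  exists2 a, pull_anchor p a &
    V (e j) (q (e j) - a) /\ forall i, i <> e j -> q i = p i.

Lemma pull_anchor_exists p : exists a, pull_anchor p a.
Proof.
have [/W_image [t Vt phit] _] := shape_mem (pull p).
exists (p (e (d (pull p))) - t); split; last by rewrite opprB addrC subrK.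
by rewrite raddfB phit opprB addrC subrK.
Qed.

Lemma pull_anchor_unique p a a' : pull_anchor p a -> pull_anchor p a' -> a = a'.
Proof.
move=> [phia Va] [phia' Va']; apply: oppr_inj; apply: (addrI (p (e _))).
by apply: phi_inj Va Va' _; rewrite !raddfB phia phia'.
Qed.

Lemma pull_block_shape p q :
  pull_block p q -> d (pull q) = d (pull p) /\ b (pull q) = b (pull p).
Proof.
move=> [a [phia _] [Vqa q_off]]; apply: shape_const; split.
  apply/W_image; exists (q (e (d (pull p))) - a) => //.
  by rewrite raddfB phia.
move=> j ne; have [_ pull_off] := shape_mem (pull p).
rewrite -pull_off // /pull q_off // => /e_inj; exact: ne.
Qed.

Lemma pull_block_refl p : pull_block p p.
Proof.
have [a [phia Va]] := pull_anchor_exists p.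
by exists a; split.
Qed.

Lemma pull_block_trans p q :
  pull_block p q -> forall r, pull_block q r <-> pull_block p r.
Proof.
move=> Bpq; have [dq bq] := pull_block_shape Bpq.
have [a [phia Va] [Vqa q_off]] := Bpq.
have anchor_q : pull_anchor q a by rewrite /pull_anchor dq bq.
move=> r; rewrite /pull_block dq; split=> -[a' anch' [Vra' r_off]].
- have ? := pull_anchor_unique anchor_q anch'; subst a'.
  by exists a => //; split=> // i ne; rewrite r_off // q_off.
- have ? := pull_anchor_unique (conj phia Va) anch'; subst a'.
  by exists a => //; split=> // i ne; rewrite r_off // q_off.
Qed.

Lemma pull_block_copy p :
  exists (i : I) (x : point (fun _ : I => G)),
    forall r, pull_block p r <-> copy V i x r.
Proof.
have [a anch] := pull_anchor_exists p.
set j := d (pull p).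
exists (e j), (fun i => if i == e j then a else p i) => r.
rewrite /copy eqxx; split.
- move=> [a' anch' [Vra' r_off]].
  have ? := pull_anchor_unique anch anch'; subst a'.
  by split=> // i ne; rewrite r_off // (introF eqP ne).
- move=> [Vra r_off]; exists a => //; split=> // i ne.
  by rewrite r_off // (introF eqP ne).
Qed.

Lemma pull_tilable : tilable (K := fun _ : I => G) V (fun _ => True).
Proof.
apply: (tilable_of_blocks (B := pull_block)).
- exact: pull_block_refl.
- exact: pull_block_trans.
- exact: pull_block_copy.
Qed.

End Pullback.

Definition GH_maps (G H : zmodType) (k l : nat) (rho : {additive G -> H}) :
  forall j : 'I_k + 'I_l, {additive G -> @GH_factors G H k l j} :=
  fun j => match j with inl _ => idfun | inr _ => rho end.

Theorem corollary18 (G H : zmodType) (T : G -> Prop) (rho : {additive G -> H})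
  (k l : nat)
  (hT : exists t, T t)
  (rho_surj : forall h : H, exists g : G, rho g = h)
  (rho_inj : forall a b : G, T a -> T b -> rho a = rho b -> a = b)
  (htil : tilable (GH_tiles k l T (image_set rho T)) (fun _ => True)) :
  tilable (I := 'I_(k + l)) (K := fun _ => G) (fun _ => T) (fun _ => True).
Proof.
have [C /tiling_shape [d [b [shape_mem shape_const]]]] := htil.
apply: (pull_tilable (e := unsplit) (phi := GH_maps rho)) shape_mem shape_const.
- exact: can_inj unsplitK.
- move=> [a|a] w /=; split.
  + by move=> Tw; exists w.
  + by move=> [t Tt <-].
  + by move=> [t [Tt <-]]; exists t.
  + by move=> [t Tt <-]; exists t.
- by move=> [a|a] x y /= Tx Ty //; exact: rho_inj.
Qed.
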